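(* Let $n$ be a nonnegative integer and let $x,y$ be complex numbers such that no denominator below vanishes. Then \[ \sum_{k=0}^{2n}(-1)^k\binom{2n}{k}\frac{\binom{x+k}{k}\binom{y+k}{k}}{\binom{x+2n}{k}\binom{y+2n}{k}}H_{k}(x) =\frac{1}{2}\frac{\binom{x+n}{n}\binom{y+n}{n}\binom{1+x+y+2n}{2n}}{\binom{x+2n}{2n}\binom{y+2n}{2n}\binom{1+x+y+n}{n}} \big\{H_n(x)-H_n(1+x+y)+H_{2n}(1+x+y)\big\}. \]
   Context: For complex $z$ and a nonnegative integer $k$, $\binom{z}{k}=\frac{z(z-1)\cdots(z-k+1)}{k!}$ (with $\binom{z}{0}=1$). For complex $x$ and nonnegative integer $m$, the generalized harmonic number is $H_0(x)=0$ and $H_m(x)=\sum_{j=1}^m\frac{1}{x+j}$ for $m\ge 1$. The parameters are assumed to be such that all denominators (including those in the harmonic numbers) are nonzero. *)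

From mathcomp Require Import all_boot all_order all_algebra.
From mathcomp Require Import complex.
From mathcomp Require Import reals.
Set Implicit Arguments. Unset Strict Implicit. Unset Printing Implicit Defensive.
Import Order.TTheory GRing.Theory Num.Theory.
Local Open Scope ring_scope.

Definition binom {F : fieldType} (z : F) (k : nat) : F :=
  (\prod_(i < k) (z - i%:R)) / (k`!)%:R.

Definition harm {F : fieldType} (m : nat) (x : F) : F :=
  \sum_(1 <= j < m.+1) (x + j%:R)^-1.

From mathcomp Require Import all_boot all_order all_algebra.
From mathcomp Require Import complex reals.
From mathcomp Require Import ring zify.
Import Order.TTheory GRing.Theory Num.Theory.
Local Open Scope ring_scope.
Set Implicit Arguments. Unset Strict Implicit. Unset Printing Implicit Defensive.

(* Write rising z m for (z+1)(z+2)...(z+m).  The theorem is the derivative with respect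
   to x of the Dixon-type identity
     n! * sum_k (-1)^k C(2n,k) rising x k * rising x (2n-k) * rising y k * rising y (2n-k)
       = (2n)! * rising x n * rising y n * rising (1+x+y+n) n.
   Differentiating the k-th summand multiplies it by H_k(x) + H_{2n-k}(x); as the summand is
   invariant under k <-> 2n-k, the left side becomes twice the sum weighted by H_k(x).  On the
   right the factor H_n(x) + H_n(1+x+y+n) = H_n(x) - H_n(1+x+y) + H_{2n}(1+x+y) appears.
   Dividing by rising x (2n) * rising y (2n) turns the summands into the binomial quotients
   of the statement.
   The Dixon-type identity is proved by Zeilberger's method: both sides satisfy
     (x+y+n+2) S(n+1) = 2(2n+1)(x+n+1)(y+n+1)(x+y+2n+2)(x+y+2n+3) S(n),
   the sum by means of a telescoping certificate.  To differentiate it, it is first proved in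
   the fraction field of K[X] with x = X, where x+y+n+2 never vanishes. *)

Definition rising {R : comPzRingType} (z : R) (m : nat) : R :=
  \prod_(0 <= i < m) (z + i.+1%:R).

Section Rising.
Variable R : comPzRingType.
Implicit Types (z : R) (m k : nat).

Lemma rising0 z : rising z 0 = 1.
Proof. by rewrite /rising big_geq. Qed.

Lemma risingS z m : rising z m.+1 = rising z m * (z + m.+1%:R).
Proof. by rewrite /rising big_nat_recr. Qed.

Lemma risingSl z m : rising z m.+1 = (z + 1) * rising (z + 1) m.
Proof.
rewrite /rising big_nat_recl //; apply: congr1.
by apply: eq_bigr => i _; rewrite -addrA [1 + _]addrC natr1.
Qed.

Lemma rising_subr1S z m : rising (z - 1) m.+1 = z * rising z m.
Proof. by rewrite risingSl subrK. Qed.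

Lemma risingD z m k : rising z (m + k) = rising z m * rising (z + m%:R) k.
Proof.
rewrite /rising (big_cat_nat (n := m)) ?leq_addr //=; congr (_ * _).
rewrite -{1}[m]add0n big_addn addKn; apply: eq_bigr => i _.
by rewrite -addrA -natrD addnS addnC.
Qed.

Lemma rising_rmorph (S : comPzRingType) (f : {rmorphism R -> S}) z m :
  f (rising z m) = rising (f z) m.
Proof. by rewrite rmorph_prod; apply: eq_bigr => i _; rewrite rmorphD rmorph_nat. Qed.

End Rising.

Section Field.
Variable F : fieldType.
Implicit Types (z : F) (m k : nat).

Lemma rising_neq0 z m : (forall i, (i < m)%N -> z + i.+1%:R != 0) -> rising z m != 0.
Proof.
move=> nz; rewrite /rising prodf_seq_neq0; apply/allP => i.
by rewrite mem_index_iota => /andP[_ /nz].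
Qed.

Lemma rising_neq0_leq z m k : (m <= k)%N -> rising z k != 0 -> rising z m != 0.
Proof. by move/subnKC <-; rewrite risingD mulf_eq0 negb_or => /andP[]. Qed.

Lemma harmE m z : harm m z = \sum_(0 <= i < m) (z + i.+1%:R)^-1.
Proof. by rewrite /harm big_add1. Qed.

Lemma harmS m z : harm m.+1 z = harm m z + (z + m.+1%:R)^-1.
Proof. by rewrite !harmE big_nat_recr. Qed.

Lemma harmD m k z : harm (m + k) z = harm m z + harm k (z + m%:R).
Proof.
rewrite !harmE (big_cat_nat (n := m)) ?leq_addr //=; congr (_ + _).
rewrite -{1}[m]add0n big_addn addKn; apply: eq_bigr => i _.
by rewrite -addrA -natrD addnS addnC.
Qed.

Lemma binom_rising z k : binom (z + k%:R) k = rising z k / k`!%:R.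
Proof.
rewrite /binom /rising big_rev_mkord subn0; congr (_ / _).
by apply: eq_bigr => i _; rewrite subnSK // natrB ?addrA // ltnW.
Qed.

End Field.

Section CharZero.
Variable F : fieldType.
Hypothesis F0 : [pchar F] =i pred0.
Implicit Types (z : F) (m k N : nat).

Lemma natf_fact_neq0 m : m`!%:R != 0 :> F.
Proof. by move/pcharf0P: F0 => ->; rewrite -lt0n fact_gt0. Qed.

Lemma natf_succ_neq0 m : m.+1%:R != 0 :> F.
Proof. by move/pcharf0P: F0 => ->. Qed.

Lemma natf_bin a b : 'C(a + b, a)%:R = (a + b)`!%:R / (a`!%:R * b`!%:R) :> F.
Proof.
rewrite -(bin_fact (leq_addr b a)) addKn !natrM mulrK //.
by rewrite unitfE mulf_neq0 // natf_fact_neq0.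
Qed.

Lemma binom_nat N k : (k <= N)%N -> binom N%:R k = 'C(N, k)%:R :> F.
Proof.
move=> leNk; rewrite -[RHS](mulfK (natf_fact_neq0 k)) -natrM bin_ffact.
rewrite ffact_prod natr_prod /binom; congr (_ / _); apply: eq_bigr => i _.
by rewrite natrB // ltnW // (leq_trans (ltn_ord i)).
Qed.

Lemma binom_ratio z N k : (k <= N)%N -> rising z N != 0 ->
  binom (z + k%:R) k / binom (z + N%:R) k = rising z k * rising z (N - k) / rising z N.
Proof.
move=> leNk; have eN : rising z N = rising z (N - k) * rising (z + (N - k)%:R) k.
  by rewrite -risingD subnK.
rewrite eN mulf_eq0 negb_or => /andP[nz1 nz2].
have -> : z + N%:R = z + (N - k)%:R + k%:R by rewrite -addrA -natrD subnK.
rewrite !binom_rising; field.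
by rewrite nz1 nz2 natf_fact_neq0.
Qed.

End CharZero.

Lemma sumr_symmetric_weight (R : comPzRingType) N (w f : nat -> R) :
  (forall k, (k <= N)%N -> w (N - k)%N = w k) ->
  \sum_(0 <= k < N.+1) w k * f (N - k)%N = \sum_(0 <= k < N.+1) w k * f k.
Proof.
move=> w_sym; rewrite big_nat_rev add0n; apply: eq_big_nat => k /andP[_ lt_k].
by rewrite subSS subKn // w_sym.
Qed.

Definition dixon_term {R : comPzRingType} (x y : R) n k : R :=
  (-1) ^+ k * 'C(2 * n, k)%:R * rising x k * rising x (2 * n - k)
  * rising y k * rising y (2 * n - k).

Definition dixon_sum {R : comPzRingType} (x y : R) n : R :=
  \sum_(0 <= k < (2 * n).+1) dixon_term x y n k.

(* Found by Zeilberger's algorithm for the recurrence of [dixon_sum]. *)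
Definition dixon_cert {R : comPzRingType} (x y : R) n k : R :=
  if k is k'.+1 then
    (-1) ^+ k' * 'C((2 * n).+1, k')%:R * rising x k * rising y k
    * (rising (x - 1) ((2 * n).+1 - k') * rising (y - 1) ((2 * n).+1 - k') * (x + y + n%:R + 2)
       - (2 * n%:R + 1 - k'%:R) * rising x (2 * n - k') * rising y (2 * n - k')
         * ((2 * n%:R + 2) * (x + y) + (n%:R + 1) * (4 * n%:R + 4 - k'%:R)))
  else 0.

Section DixonRecurrence.
Variable F : fieldType.
Hypothesis F0 : [pchar F] =i pred0.
Variables x y : F.

Let lead n : F := x + y + n%:R + 2.
Let ratio n : F := 2 * (2 * n%:R + 1) * (x + n%:R + 1) * (y + n%:R + 1)
                   * (x + y + 2 * n%:R + 2) * (x + y + 2 * n%:R + 3).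

Lemma dixon_telescope0 n :
  lead n * dixon_term x y n.+1 0 - ratio n * dixon_term x y n 0
  = dixon_cert x y n 1 - dixon_cert x y n 0.
Proof.
rewrite /dixon_term /dixon_cert /lead /ratio !bin0 !subn0.
have -> : (2 * n.+1 = (2 * n).+2)%N by lia.
rewrite !rising_subr1S !risingS !rising0 !expr0 -!natr1 !natrM.
ring.
Qed.

Lemma dixon_telescope_2nS n :
  lead n * dixon_term x y n.+1 (2 * n).+1 - ratio n * dixon_term x y n (2 * n).+1
  = dixon_cert x y n (2 * n).+2 - dixon_cert x y n (2 * n).+1.
Proof.
rewrite /dixon_term /dixon_cert /lead /ratio.
have -> : (2 * n.+1 = (2 * n).+2)%N by lia.
rewrite (bin_small (ltnSn (2 * n))) binn !binSn.
have -> : ((2 * n).+2 - (2 * n).+1 = 1)%N by lia.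
have -> : ((2 * n) - (2 * n).+1 = 0)%N by lia.
have -> : ((2 * n).+1 - (2 * n).+1 = 0)%N by lia.
have -> : ((2 * n).+1 - (2 * n) = 1)%N by lia.
rewrite subnn !rising_subr1S !risingS !rising0 !exprS -!natr1 !natrM.
ring.
Qed.

Lemma dixon_telescope_2nSS n :
  lead n * dixon_term x y n.+1 (2 * n).+2 - ratio n * dixon_term x y n (2 * n).+2
  = dixon_cert x y n (2 * n).+3 - dixon_cert x y n (2 * n).+2.
Proof.
rewrite /dixon_term /dixon_cert /lead /ratio.
have -> : (2 * n.+1 = (2 * n).+2)%N by lia.
rewrite (bin_small (ltnSn (2 * n).+1)) (bin_small (_ : 2 * n < (2 * n).+2)%N) // !binn.
have -> : ((2 * n).+1 - (2 * n).+2 = 0)%N by lia.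
have -> : ((2 * n) - (2 * n).+1 = 0)%N by lia.
have -> : ((2 * n) - (2 * n).+2 = 0)%N by lia.
have -> : ((2 * n).+1 - (2 * n).+1 = 0)%N by lia.
rewrite subnn !rising0 !exprS -!natr1 !natrM.
ring.
Qed.

Lemma dixon_telescope_mid n k j : (2 * n = k.+1 + j)%N ->
  lead n * dixon_term x y n.+1 k.+1 - ratio n * dixon_term x y n k.+1
  = dixon_cert x y n k.+2 - dixon_cert x y n k.+1.
Proof.
move=> e; have en : n%:R = (k%:R + j%:R + 1) / 2 :> F.
  have h2 : 2 != 0 :> F := natf_succ_neq0 F0 1.
  by apply: (mulIf h2); rewrite mulfVK // mulrC -natrM e -addn1 !natrD; ring.
rewrite /dixon_term /dixon_cert /lead /ratio.
have -> : (2 * n.+1 = k.+1 + j.+2)%N by lia.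
rewrite e.
have -> : (k.+1 + j.+2 - k.+1 = j.+2)%N by lia.
have -> : (k.+1 + j - k.+1 = j)%N by lia.
have -> : ((k.+1 + j).+1 - k.+1 = j.+1)%N by lia.
have -> : ((k.+1 + j).+1 - k = j.+2)%N by lia.
have -> : ((k.+1 + j) - k = j.+1)%N by lia.
have -> : ((k.+1 + j).+1 = k.+1 + j.+1)%N by lia.
rewrite !(natf_bin F0 k.+1).
have -> : ((k.+1 + j.+1) = k + j.+2)%N by lia.
rewrite (natf_bin F0 k j.+2).
have -> : (k.+1 + j.+2 = (k + j).+3)%N by lia.
have -> : (k.+1 + j = (k + j).+1)%N by lia.
have -> : (k + j.+2 = (k + j).+2)%N by lia.
rewrite !factS !rising_subr1S !risingS !natrM en -!natr1 natrD !exprS.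
by field; rewrite !natr1 !natf_fact_neq0 ?natf_succ_neq0.
Qed.

Lemma dixon_telescope n k : (k <= (2 * n).+2)%N ->
  lead n * dixon_term x y n.+1 k - ratio n * dixon_term x y n k
  = dixon_cert x y n k.+1 - dixon_cert x y n k.
Proof.
case: k => [_|k le_k]; first exact: dixon_telescope0.
case: (ltngtP k.+1 (2 * n).+1) => [lt_k|gt_k|->].
- by apply: (@dixon_telescope_mid n k (2 * n - k.+1)); lia.
- have -> : k = (2 * n).+1 by lia.
  exact: dixon_telescope_2nSS.
- exact: dixon_telescope_2nS.
Qed.

Lemma dixon_sum_rec n : lead n * dixon_sum x y n.+1 = ratio n * dixon_sum x y n.
Proof.
have vanish k : (2 * n < k)%N -> dixon_term x y n k = 0.
  by move=> lt_nk; rewrite /dixon_term bin_small // mulr0 !mul0r.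
have -> : dixon_sum x y n = \sum_(0 <= k < (2 * n).+3) dixon_term x y n k.
  rewrite /dixon_sum [RHS](big_cat_nat (n := (2 * n).+1)) //=; last lia.
  rewrite [X in _ = _ + X]big_nat_cond [X in _ = _ + X]big1 ?addr0 //.
  by move=> k /andP[/andP[/vanish]].
apply/eqP; rewrite -subr_eq0 /dixon_sum.
have -> : ((2 * n.+1).+1 = (2 * n).+3)%N by lia.
rewrite !mulr_sumr -sumrB (telescope_sumr_eq (dixon_cert x y n)) //.
  by rewrite /= bin_small // mulr0 !mul0r subrr.
by move=> k /andP[_ lt_k]; apply: dixon_telescope.
Qed.

Lemma dixon_closed_rec n :
  lead n * ((2 * n.+1)`!%:R * rising x n.+1 * rising y n.+1 * rising (1 + x + y + n.+1%:R) n.+1)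
  = n.+1%:R * ratio n * ((2 * n)`!%:R * rising x n * rising y n * rising (1 + x + y + n%:R) n).
Proof.
set w := 1 + x + y + n%:R.
have -> : 1 + x + y + n.+1%:R = w + 1 by rewrite -natr1 addrA.
transitivity ((2 * n.+1)`!%:R * rising x n.+1 * rising y n.+1 * ((w + 1) * rising (w + 1) n.+1)).
  by rewrite /lead /w; ring.
have -> : (2 * n.+1 = (2 * n).+2)%N by lia.
by rewrite -risingSl !risingS !factS !natrM -!natr1 /ratio /w; ring.
Qed.

Hypothesis lead_neq0 : forall n, x + y + n%:R + 2 != 0.

Lemma dixon_identity n :
  n`!%:R * dixon_sum x y n
  = (2 * n)`!%:R * rising x n * rising y n * rising (1 + x + y + n%:R) n.
Proof.
elim: n => [|n IH].
  by rewrite /dixon_sum big_nat1 /dixon_term !rising0 /= !mulr1.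
apply: (mulfI (lead_neq0 n)); rewrite -[_ + 2]/(lead n) dixon_closed_rec -IH.
by rewrite factS natrM mulrCA -mulrA dixon_sum_rec; ring.
Qed.

End DixonRecurrence.

Lemma dixon_sum_rmorph (R S : comPzRingType) (f : {rmorphism R -> S}) (x y : R) n :
  f (dixon_sum x y n) = dixon_sum (f x) (f y) n.
Proof.
rewrite rmorph_sum; apply: eq_bigr => k _.
by rewrite !rmorphM rmorphXn rmorphN1 rmorph_nat !rising_rmorph.
Qed.

Lemma dixon_term_sym (R : comPzRingType) (x y : R) n k : (k <= 2 * n)%N ->
  dixon_term x y n (2 * n - k) = dixon_term x y n k.
Proof.
move=> le_k; rewrite /dixon_term subKn // bin_sub //.
rewrite -signr_odd oddB // oddM /= signr_odd; ring.
Qed.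

Section FractionCharZero.
Variable K : fieldType.
Hypothesis K0 : [pchar K] =i pred0.

Lemma pchar_fraction_poly : [pchar {fraction {poly K}}] =i pred0.
Proof.
apply/pcharf0P => m; rewrite -(rmorph_nat (@tofrac _)) tofrac_eq0 -polyC_natr polyC_eq0.
exact: (pcharf0P _).1 K0 m.
Qed.

Lemma dixon_identity_poly (y : K) n :
  n`!%:R * dixon_sum 'X y%:P n
  = (2 * n)`!%:R * rising 'X n * rising y%:P n * rising (1 + 'X + y%:P + n%:R) n.
Proof.
apply/eqP; rewrite -tofrac_eq; apply/eqP.
rewrite !rmorphM !rmorph_nat dixon_sum_rmorph !rising_rmorph !rmorphD rmorph_nat rmorph1.
apply: (dixon_identity pchar_fraction_poly) => m.
have -> : (tofrac 'X + tofrac y%:P + m%:R + 2 : {fraction {poly K}})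
          = tofrac ('X + (y + m%:R + 2)%:P).
  by rewrite !rmorphD /= !rmorph_nat; ring.
by rewrite tofrac_eq0 monic_neq0 // monicXaddC.
Qed.

End FractionCharZero.

Section RisingDerivative.
Variable K : fieldType.
Implicit Types (c x : K) (m : nat).

Lemma horner_rising (p : {poly K}) x m : (rising p m).[x] = rising p.[x] m.
Proof. exact: (rising_rmorph (horner_eval x)). Qed.

Lemma deriv_rising c x m : rising (x + c) m != 0 ->
  (rising ('X + c%:P) m)^`().[x] = rising (x + c) m * harm m (x + c).
Proof.
elim: m => [|m IH]; first by rewrite !rising0 -polyC1 derivC hornerC /harm big_geq ?mulr0.
rewrite risingS mulf_eq0 negb_or => /andP[nz_m nz_S].
rewrite risingS derivM !derivD derivX derivC -polyC_natr derivC !addr0 mulr1.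
rewrite hornerD !hornerM IH // horner_rising !hornerD hornerX !hornerC harmS.
by rewrite [RHS]mulrDr -[X in _ = _ + X]mulrA mulfV // mulr1 mulrAC.
Qed.

Lemma deriv_risingX x m : rising x m != 0 ->
  (rising 'X m)^`().[x] = rising x m * harm m x.
Proof. by have := @deriv_rising 0 x m; rewrite !addr0. Qed.

End RisingDerivative.

Lemma deriv_dixon_sum (K : fieldType) (x y : K) n : rising x (2 * n) != 0 ->
  (dixon_sum 'X y%:P n)^`().[x]
  = \sum_(0 <= k < (2 * n).+1) dixon_term x y n k * (harm k x + harm (2 * n - k) x).
Proof.
move=> nzX; rewrite /dixon_sum raddf_sum /= horner_sum.
apply: eq_big_nat => k /andP[_]; rewrite ltnS => le_k.
have -> : dixon_term 'X y%:P n k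
    = ((-1) ^+ k * 'C(2 * n, k)%:R * rising y k * rising y (2 * n - k))%:P
      * (rising 'X k * rising 'X (2 * n - k)).
  by rewrite /dixon_term !rmorphM rmorphXn rmorphN1 rmorph_nat -!(rising_rmorph polyC); ring.
rewrite deriv_mulC hornerCM derivM hornerD !hornerM !horner_rising hornerX.
rewrite !deriv_risingX /dixon_term; first ring.
- exact: rising_neq0_leq (leq_subr _ _) nzX.
- exact: rising_neq0_leq le_k nzX.
Qed.

Lemma harmonic_dixon (K : fieldType) (K0 : [pchar K] =i pred0) (x y : K) n :
  rising x (2 * n) != 0 -> rising (1 + x + y + n%:R) n != 0 ->
  2 * n`!%:R * \sum_(0 <= k < (2 * n).+1) dixon_term x y n k * harm k x
  = (2 * n)`!%:R * rising x n * rising y n * rising (1 + x + y + n%:R) n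
    * (harm n x + harm n (1 + x + y + n%:R)).
Proof.
have -> : 1 + x + y + n%:R = x + (1 + y + n%:R) by ring.
move=> nzX nzQ; have := congr1 (fun p => p^`().[x]) (dixon_identity_poly K0 y n).
have -> : 1 + 'X + y%:P + n%:R = 'X + (1 + y + n%:R)%:P.
  by rewrite !rmorphD /= polyC1 polyC_natr; ring.
rewrite -[n`!%:R]polyC_natr -rising_rmorph.
have -> : (2 * n)`!%:R * rising 'X n * (rising y n)%:P * rising ('X + (1 + y + n%:R)%:P) n
    = ((2 * n)`!%:R * rising y n)%:P * (rising 'X n * rising ('X + (1 + y + n%:R)%:P) n).
  by rewrite rmorphM /= polyC_natr; ring.
rewrite /= !deriv_mulC !hornerCM derivM hornerD !hornerM !horner_rising !hornerD hornerX hornerC.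
rewrite deriv_dixon_sum // deriv_risingX ?(rising_neq0_leq (leq_pmull _ _) nzX) //.
rewrite deriv_rising // (eq_bigr _ (fun k _ => mulrDr _ _ _)) big_split /=.
rewrite (@sumr_symmetric_weight _ _ (dixon_term x y n) (harm^~ x)) => [e|k];
  last exact: dixon_term_sym.
by rewrite -mulrA mulr_natl mulr2n -mulrDr e; ring.
Qed.

Unset Implicit Arguments.

Theorem theorem1 (R : realType) (n : nat) (x y : R[i])
  (hbx : forall k : nat, (k <= 2 * n)%N -> binom (x + (2 * n)%:R) k != 0)
  (hby : forall k : nat, (k <= 2 * n)%N -> binom (y + (2 * n)%:R) k != 0)
  (hbxy : binom (1 + x + y + n%:R) n != 0)
  (hhx : forall j : nat, (1 <= j <= 2 * n)%N -> x + j%:R != 0)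
  (hhxy : forall j : nat, (1 <= j <= 2 * n)%N -> 1 + x + y + j%:R != 0) :
  \sum_(0 <= k < (2 * n).+1)
     (-1) ^+ k * (binom (2 * n)%:R k : R[i])
     * ((binom (x + k%:R) k * binom (y + k%:R) k)
        / (binom (x + (2 * n)%:R) k * binom (y + (2 * n)%:R) k))
     * harm k x
  = 2^-1 * ((binom (x + n%:R) n * binom (y + n%:R) n
             * binom (1 + x + y + (2 * n)%:R) (2 * n))
            / (binom (x + (2 * n)%:R) (2 * n) * binom (y + (2 * n)%:R) (2 * n)
               * binom (1 + x + y + n%:R) n))
    * (harm n x - harm n (1 + x + y) + harm (2 * n) (1 + x + y)).
Proof.
have C0 : [pchar R[i]] =i pred0 := pchar_num _.
have nzX : rising x (2 * n) != 0 by apply: rising_neq0 => i lt_i; apply: hhx; lia.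
have nzY : rising y (2 * n) != 0.
  by apply: contraNneq (hby _ (leqnn _)) => Y0; rewrite binom_rising Y0 mul0r.
have nzXY : rising (1 + x + y) (2 * n) != 0 by apply: rising_neq0 => i lt_i; apply: hhxy; lia.
have eXY : rising (1 + x + y) (2 * n) = rising (1 + x + y) n * rising (1 + x + y + n%:R) n.
  by rewrite mul2n -addnn risingD.
have [nzP nzQ] : rising (1 + x + y) n != 0 /\ rising (1 + x + y + n%:R) n != 0.
  by move: nzXY; rewrite eXY mulf_eq0 negb_or => /andP[].
transitivity ((rising x (2 * n) * rising y (2 * n))^-1
               * \sum_(0 <= k < (2 * n).+1) dixon_term x y n k * harm k x).
  rewrite mulr_sumr; apply: eq_big_nat => k /andP[_]; rewrite ltnS => le_k.
  rewrite binom_nat // -mulf_div !binom_ratio // /dixon_term.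
  by field; rewrite nzX nzY.
have e := harmonic_dixon C0 nzX nzQ.
set T := \sum_(0 <= k < _) _ in e *.
have nz2 : 2 * n`!%:R != 0 :> R[i].
  by rewrite mulf_neq0 ?(natf_fact_neq0 C0) ?(natf_succ_neq0 C0 1).
rewrite -[T](mulKf nz2) e !binom_rising eXY.
rewrite (_ : harm (2 * n) _ = harm n (1 + x + y) + harm n (1 + x + y + n%:R)).
  by field; rewrite !(natf_fact_neq0 C0) nzP nzX nzY.
by rewrite mul2n -addnn harmD.
Qed.
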